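(* Let $2\leq d\leq k$ be integers, $\Sigma_k=\{\sigma_1,\ldots,\sigma_k\}$, $\Sigma_d=\{\sigma_1,\ldots,\sigma_d\}$. Consider $r\geq 2$ users over $\Sigma_k$, where user 1 has confusion graph $G_1=(\Sigma_k,\{ab\mid a\in\Sigma_k,\ b\in\Sigma_k\setminus\Sigma_d,\ a\neq b\})$ and users $2,\ldots,r$ have arbitrary confusion graphs $G_2,\ldots,G_r$ on $\Sigma_k$. If $(\alpha\log_2 d,R_2,\ldots,R_r)$ with $\alpha\in[0,1]$ is a feasible rate vector, then $\sum_{i=2}^r R_i\leq(1-\alpha)\log_2 k$.
   Context: Setting: a sender broadcasts a word of length $n$ over a finite alphabet $\Sigma$ to $r$ users; user $i$ has a confusion graph $G_i$ on vertex set $\Sigma$, where $ab$ is an edge iff user $i$ cannot distinguish letters $a$ and $b$. Two words $x,y\in\Sigma^n$ are distinguishable by user $i$ if there is a coordinate $t$ with $x_t\neq y_t$ and $x_ty_t$ not an edge of $G_i$. A vector $(m_1,\ldots,m_r)$ of positive integers is feasible for length $n$ if there is a map $E:[m_1]\times\cdots\times[m_r]\to\Sigma^n$ such that for every $i$ and all tuples $a,a'$ with $a_i\neq a'_i$, $E(a)$ and $E(a')$ are distinguishable by user $i$. A rate vector $(R_1,\ldots,R_r)$ is feasible if there is a sequence of feasible vectors for lengths $n\to\infty$ with $R_i=\lim_{n\to\infty}\frac{\log_2 m_i^{(n)}}{n}$ for all $i$. *)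

From Stdlib Require Import Reals.
From mathcomp Require Import all_boot.
Set Implicit Arguments. Unset Strict Implicit. Unset Printing Implicit Defensive.

(* Alphabet Sigma_k = 'I_k (sigma_{j+1} is the ordinal j).
   Words of length n over Sigma_k. *)
Definition word (k n : nat) := {ffun 'I_n -> 'I_k}.

Definition is_graph (k : nat) (G : rel 'I_k) : Prop :=
  (forall a b, G a b = G b a) /\ (forall a, G a a = false).

Definition distinguishable (k n : nat) (G : rel 'I_k) (x y : word k n) : Prop :=
  exists t : 'I_n, x t != y t /\ ~~ G (x t) (y t).

Definition feasible_vec (k r n : nat) (G : 'I_r -> rel 'I_k)
    (m : {ffun 'I_r -> nat}) : Prop :=
  (forall i, 0 < m i) /\
  exists E : {ffun 'I_r -> nat} -> word k n,
    forall (i : 'I_r) (a a' : {ffun 'I_r -> nat}),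
      (forall j, a j < m j) -> (forall j, a' j < m j) ->
      a i != a' i -> distinguishable (G i) (E a) (E a').

Local Open Scope R_scope.
Definition log2 (x : R) : R := ln x / ln 2.

Definition feasible_rate (k r : nat) (G : 'I_r -> rel 'I_k) (Rv : 'I_r -> R) : Prop :=
  exists (ns : nat -> nat) (ms : nat -> {ffun 'I_r -> nat}),
    (forall j, @feasible_vec k r (ns j) G (ms j)) /\
    (forall N, exists J, forall j, (J <= j)%N -> (N <= ns j)%N) /\
    (forall i, Un_cv (fun j => log2 (INR (ms j i)) / INR (ns j)) (Rv i)).

Definition G_first (k d : nat) : rel 'I_k :=
  fun a b => (a != b) && ((d <= a)%N || (d <= b)%N).

From Stdlib Require Import Reals.
From HB Require Import structures.
From mathcomp Require Import all_boot all_order all_algebra.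
From mathcomp Require Import classical_sets interval_inference reals exp convex hoelder.
From mathcomp Require Import ring lra.
From mathcomp Require Import Rstruct Rstruct_topology.
Set Implicit Arguments. Unset Strict Implicit. Unset Printing Implicit Defensive.
Import Order.TTheory GRing.Theory Num.Theory.

(* For a message c of user 1 let W_c be the set of
   codewords carrying c; it has m_2 ... m_r elements, since the other users
   tell its words apart.  User 1 confuses a word x with every word of
   Sigma_d^n that agrees with x wherever x uses a letter of Sigma_d (the
   shadow of x); as user 1 distinguishes different messages, the shadows of
   the W_c are disjoint subsets of Sigma_d^n.  An induction on n, splitting
   words by their first letter and using the convexity of t |-> t^e with
   d^e = k, gives |W| <= |shadow W|^e.  Hence
   m_1 (m_2 ... m_r)^(log d / log k) <= d^n; taking logarithms, dividing by
   n log d and letting n grow yields alpha + (R_2 + ... + R_r) / log k <= 1. *)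

Section PowerConvexity.
Local Open Scope ring_scope.
Variables (R : realType) (e : R).
Hypothesis e_ge1 : 1 <= e.

Let e_neq0 : e != 0. Proof. by rewrite gt_eqF // (lt_le_trans ltr01). Qed.

Lemma powR_convex2 (t a b : R) : 0 <= t <= 1 -> 0 <= a -> 0 <= b ->
  (t * a + (1 - t) * b) `^ e <= t * a `^ e + (1 - t) * b `^ e.
Proof.
case/andP=> t0 t1 a0 b0.
have := @convex_powR R e e_ge1 (Itv01 t0 t1) a b.
by rewrite !inE /= !in_itv /= !andbT !convRE; apply.
Qed.

Lemma powR_spread (a b x y : R) : 0 <= a -> a <= x <= b -> x + y = a + b ->
  x `^ e + y `^ e <= a `^ e + b `^ e.
Proof.
move=> a0 /andP[ax xb] xy.
have [ab|ab] := eqVneq a b.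
  have xa : x = a by apply/eqP; rewrite eq_le ax andbT ab.
  have yb : y = b by lra.
  by rewrite xa yb.
have ba : 0 < b - a by rewrite subr_gt0 lt_neqAle ab (le_trans ax xb).
pose t := (b - x) / (b - a).
have t01 : 0 <= t <= 1.
  by rewrite /t divr_ge0 ?subr_ge0 ?ler_pdivrMr ?mul1r //; lra.
have b0 : 0 <= b by rewrite (le_trans a0) // (le_trans ax).
have xE : x = t * a + (1 - t) * b by rewrite /t; field; rewrite gt_eqF.
have yE : y = (1 - t) * a + t * b.
  have -> : y = a + b - x by lra.
  by rewrite /t; field; rewrite gt_eqF.
have t01' : 0 <= 1 - t <= 1 by lra.
have := powR_convex2 t01 a0 b0; have := powR_convex2 t01' a0 b0.
rewrite -xE subKr -yE; lra.
Qed.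

Lemma powRD_sub_powR_le (a a' b : R) : 0 <= a <= a' -> 0 <= b ->
  (a + b) `^ e - a `^ e <= (a' + b) `^ e - a' `^ e.
Proof.
case/andP=> a0 aa' b0.
suff : a' `^ e + (a + b) `^ e <= a `^ e + (a' + b) `^ e by lra.
apply: powR_spread => //; [by rewrite aa' lerDl | ring].
Qed.

Lemma sum_powR_excess (I : Type) (r : seq I) (u : I -> R) (M : R) :
  0 <= M -> (forall i, M <= u i) ->
  \sum_(i <- r) u i `^ e + ((size r)%:R `^ e - (size r)%:R) * M `^ e
    <= (\sum_(i <- r) u i) `^ e.
Proof.
move=> M0 Mu; elim: r => [|i r IH]; first by rewrite !big_nil /= powR0 // subrr mul0r addr0.
rewrite !big_cons /=.
set n := size r; set S := \sum_(j <- r) u j.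
have nMS : n%:R * M <= S.
  by rewrite /S /n -sum1_size natr_sum mulr_suml ler_sum // => j _; rewrite mul1r.
have S0 : 0 <= S by rewrite (le_trans _ nMS) // mulr_ge0.
have step : (M + n%:R * M) `^ e - M `^ e - (n%:R * M) `^ e
    <= (u i + S) `^ e - u i `^ e - S `^ e.
  have := powRD_sub_powR_le (a := M) (a' := u i) (b := S).
  have := powRD_sub_powR_le (a := n%:R * M) (a' := S) (b := M).
  rewrite !(addrC M) (addrC S) mulr_ge0 ?M0 ?Mu ?S0 ?nMS //=; lra.
have hom : (M + n%:R * M) `^ e = n.+1%:R `^ e * M `^ e.
  by rewrite -powRM // mulrSr mulrDl mul1r addrC.
rewrite powRM // hom in step.
have n1 : n.+1%:R = n%:R + 1 :> R by rewrite -natr1.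
move: IH; rewrite -/n -/S; lra.
Qed.
End PowerConvexity.

Lemma card_ord_lt k d : d <= k -> #|[pred j : 'I_k | j < d]| = d.
Proof. by move=> dk; rewrite -sum1_card -(big_ord_widen _ (fun=> 1) dk) sum1_card card_ord. Qed.

Lemma card_ord_ge k d : d <= k -> #|[pred j : 'I_k | ~~ (j < d)]| = k - d.
Proof.
move=> dk; apply/eqP; rewrite -(eqn_add2l d) subnKC //.
by rewrite -{1}(card_ord_lt dk) (cardC [pred j : 'I_k | j < d]) card_ord.
Qed.

Section Words.
Variables (k d : nat).

Definition wcons n (a : 'I_k) (w : word k n) : word k n.+1 :=
  [ffun t => if unlift ord0 t is Some t' then w t' else a].

Definition slice n (W : {set word k n.+1}) (a : 'I_k) : {set word k n} :=
  [set w | wcons a w \in W].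

Lemma wcons0 n a (w : word k n) : wcons a w ord0 = a.
Proof. by rewrite ffunE unlift_none. Qed.

Lemma wconsS n a (w : word k n) t : wcons a w (lift ord0 t) = w t.
Proof. by rewrite ffunE liftK. Qed.

Lemma wcons_inj n a : injective (@wcons n a).
Proof. by move=> w1 w2 e; apply/ffunP => t; rewrite -(wconsS a w1) e wconsS. Qed.

Lemma wcons_eta n (x : word k n.+1) : wcons (x ord0) [ffun t => x (lift ord0 t)] = x.
Proof. by apply/ffunP => t; rewrite ffunE; case: unliftP => [t'|] ->; rewrite ?ffunE. Qed.

Lemma card_slices n (W : {set word k n.+1}) : #|W| = \sum_a #|slice W a|.
Proof.
rewrite -sum1_card (partition_big (fun x : word k n.+1 => x ord0) predT) //=.
apply: eq_bigr => a _; rewrite sum1_card -(card_imset _ (@wcons_inj n a)).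
apply: eq_card => x; rewrite [in RHS]unfold_in /=; apply/andP/imsetP.
  by case=> xW /eqP <-; exists [ffun t => x (lift ord0 t)]; rewrite ?inE wcons_eta.
by case=> w; rewrite inE => wW ->; rewrite wW wcons0.
Qed.

(* The words over Sigma_d that user 1 cannot tell apart from some word of W:
   they agree with it wherever it uses a letter of Sigma_d. *)
Definition shadow n (W : {set word k n}) : {set word k n} :=
  [set z : word k n | [forall t, z t < d] &&
           [exists x in W, [forall t, (x t < d) ==> (z t == x t)]]].

Lemma shadowP n (W : {set word k n}) (z : word k n) :
  reflect ((forall t, z t < d) /\ exists2 x, x \in W & forall t, x t < d -> z t = x t)
          (z \in shadow W).
Proof.
rewrite inE; apply: (iffP andP).
  case=> /forallP zd /existsP[x /andP[xW /forallP xz]]; split => //.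
  by exists x => // t /(implyP (xz t)) /eqP.
case=> zd [x xW xz]; split; first exact/forallP.
by apply/existsP; exists x; rewrite xW; apply/forallP => t; apply/implyP => /xz ->.
Qed.

(* User 1 confuses a letter outside Sigma_d with every letter, so the shadow of
   a slice starting outside Sigma_d lies in every slice of the shadow. *)
Lemma shadow_slice_subset n (W : {set word k n.+1}) (a : 'I_k) : a < d ->
  shadow (slice W a) :|: \bigcup_(b : 'I_k | ~~ (b < d)) shadow (slice W b)
    \subset slice (shadow W) a.
Proof.
move=> ad; apply/fintype.subsetP => z; rewrite inE => Hz; rewrite inE.
have [b [ab zU]] : exists b, (b = a \/ ~~ (b < d)) /\ z \in shadow (slice W b).
  case/orP: Hz => [zU|/bigcupP[b bd zU]]; first by exists a; split; [left|].
  by exists b; split; [right|].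
case/shadowP: zU => zd [x]; rewrite inE => xW xz.
apply/shadowP; split.
  by move=> t; case: (unliftP ord0 t) => [t'|] ->; rewrite ?wconsS ?wcons0.
exists (wcons b x) => // t; case: (unliftP ord0 t) => [t'|] ->; rewrite ?wconsS ?wcons0.
  exact: xz.
by case: ab => [-> //|/negbTE ->].
Qed.
End Words.

Section ShadowBound.
Local Open Scope ring_scope.
Variable R : realType.

Lemma natr_le_powR (e : R) (a : nat) : 1 <= e -> a%:R <= a%:R `^ e :> R.
Proof. by case: a => [|a] e1; [rewrite powR_ge0 | rewrite le1r_powR // ler1n]. Qed.

(* The k - d slices starting
   outside Sigma_d are bounded through the union V of their shadows, which lies
   in every slice of [shadow d W]; since d ^ e - d = k - d, [sum_powR_excess]
   absorbs their contribution (k - d) |V| ^ e. *)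
Lemma card_le_shadow_powR (e : R) k d n (W : {set word k n}) :
  1 <= e -> d%:R `^ e = k%:R -> (d <= k)%N ->
  #|W|%:R <= #|shadow d W|%:R `^ e.
Proof.
move=> e1 dek dk; elim: n W => [|n IH] W.
  have WU : W \subset shadow d W.
    by apply/fintype.subsetP => x xW; apply/shadowP; split; [case | exists x => // -[]].
  by apply: le_trans (natr_le_powR _ e1); rewrite ler_nat subset_leq_card.
set V := \bigcup_(b : 'I_k | ~~ (b < d)%N) shadow d (slice W b).
pose u a := (#|shadow d (slice W a) :|: V|%:R : R).
have le_powR (A B : {set word k n}) : A \subset B -> #|A|%:R `^ e <= #|B|%:R `^ e :> R.
  by move=> AB; rewrite ge0_ler_powR ?nnegrE ?ler_nat ?subset_leq_card //; lra.
have in_d : \sum_(a : 'I_k | (a < d)%N) (#|slice W a|%:R : R) <= \sum_(a : 'I_k | (a < d)%N) u a `^ e.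
  by apply: ler_sum => a _; apply: le_trans (IH _) _; apply/le_powR/finset.subsetUl.
have out_d : \sum_(a : 'I_k | ~~ (a < d)%N) (#|slice W a|%:R : R)
    <= (d%:R `^ e - d%:R) * #|V|%:R `^ e.
  rewrite dek -natrB // -card_ord_ge // mulr_natl -sumr_const.
  apply: ler_sum => a ad; apply: le_trans (IH _) (le_powR _ _ _).
  exact: (finset.bigcup_sup a ad).
have Vu a : #|V|%:R <= u a by rewrite ler_nat subset_leq_card // finset.subsetUr.
have excess := sum_powR_excess e1 (enum [pred a : 'I_k | (a < d)%N]) (ler0n _ #|V|) Vu.
rewrite -cardE card_ord_lt // !big_enum /= in excess.
have to_shadow : \sum_(a : 'I_k | (a < d)%N) u a <= #|shadow d W|%:R.
  rewrite -natr_sum ler_nat (card_slices (shadow d W)).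
  rewrite [X in (_ <= X)%N](bigID (fun a : 'I_k => (a < d)%N)) /=.
  apply: (leq_trans _ (leq_addr _ _)); apply: leq_sum => a ad.
  exact/subset_leq_card/shadow_slice_subset.
rewrite card_slices natr_sum (bigID (fun a : 'I_k => (a < d)%N)) /=.
apply: le_trans (ge0_ler_powR _ _ _ to_shadow); rewrite ?nnegrE ?sumr_ge0 //; last lra.
lra.
Qed.
End ShadowBound.

Lemma distinguishable_first k d n (G : rel 'I_k) (x y : word k n) :
  G =2 @G_first k d -> distinguishable G x y ->
  exists t, [/\ x t != y t, x t < d & y t < d].
Proof.
move=> GE [t [xy]]; rewrite GE /G_first xy negb_or -!ltnNge => /andP[xd yd].
by exists t.
Qed.

Section Encoder.
Variables (k d r n : nat) (G : 'I_r -> rel 'I_k) (m : {ffun 'I_r -> nat}).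
Variable E : {ffun 'I_r -> nat} -> word k n.
Hypothesis E_distinguishes : forall i (a a' : {ffun 'I_r -> nat}),
  (forall j, a j < m j) -> (forall j, a' j < m j) ->
  a i != a' i -> distinguishable (G i) (E a) (E a').
Variable i0 : 'I_r.

(* Message tuples are coded in [{ffun 'I_r -> 'I_N}] to range over a finite type. *)
Let N := \max_i m i.
Let msg (a : {ffun 'I_r -> 'I_N}) : {ffun 'I_r -> nat} := [ffun i => val (a i)].
Let with_first c i := [pred y : 'I_N | if i == i0 then val y == c else val y < m i].

Definition codewords (c : nat) : {set word k n} :=
  [set E (msg a) | a in family (with_first c)].

Let msg_lt c a : c < m i0 -> a \in family (with_first c) -> forall j, msg a j < m j.
Proof.
move=> cm /familyP aF j; rewrite ffunE; have := aF j; rewrite inE.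
by case: eqP => [-> /eqP -> //|].
Qed.

Let msg_first c a : a \in family (with_first c) -> msg a i0 = c.
Proof. by move=> /familyP /(_ i0); rewrite ffunE inE eqxx => /eqP. Qed.

Lemma card_codewords c : c < m i0 -> #|codewords c| = \prod_(i | i != i0) m i.
Proof.
move=> cm; rewrite card_in_imset; last first.
  move=> a a' aF a'F Eaa'; apply/ffunP => i; apply/val_inj/eqP; apply: contraTT isT => ne.
  have ne' : msg a i != msg a' i by rewrite !ffunE.
  have [t [+ _]] := E_distinguishes (msg_lt cm aF) (msg_lt cm a'F) ne'.
  by rewrite Eaa' eqxx.
have cN : c < N by apply: leq_trans cm (leq_bigmax i0).
rewrite card_family foldrE big_map big_enum (bigD1 i0) //= eqxx.
rewrite (@eq_card _ _ (pred1 (Ordinal cN))) ?card1 ?mul1n; last first.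
  by move=> y; rewrite !inE -val_eqE.
apply: eq_bigr => i /negbTE ->.
by rewrite -[RHS](card_ord_lt (leq_bigmax i)); apply: eq_card.
Qed.

Hypothesis G_i0 : G i0 =2 @G_first k d.

Lemma disjoint_shadow_codewords (c c' : 'I_(m i0)) : c != c' ->
  [disjoint shadow d (codewords c) & shadow d (codewords c')].
Proof.
move=> cc'; apply/pred0P => z /=; apply/negbTE/negP.
case/andP=> /shadowP[_ [_ /imsetP[a aF ->] za]] /shadowP[_ [_ /imsetP[a' a'F ->] za']].
have ne : msg a i0 != msg a' i0 by rewrite (msg_first aF) (msg_first a'F).
have := E_distinguishes (msg_lt (ltn_ord c) aF) (msg_lt (ltn_ord c') a'F) ne.
case/(distinguishable_first G_i0) => t [/eqP + xd yd].
by rewrite -(za t xd) -(za' t yd).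
Qed.

Lemma sum_card_shadow_codewords :
  d <= k -> \sum_(c < m i0) #|shadow d (codewords c)| <= d ^ n.
Proof.
move=> dk.
have -> : \sum_(c < m i0) #|shadow d (codewords c)| =
    #|\bigcup_(c < m i0) shadow d (codewords c)|.
  rewrite -sum1_card (partition_disjoint_bigcup _ _ disjoint_shadow_codewords).
  by apply: eq_bigr => c _; rewrite sum1_card.
have /subset_leq_card : \bigcup_(c < m i0) shadow d (codewords c) \subset
    ffun_on [pred a : 'I_k | a < d].
  apply/fintype.subsetP => z /bigcupP[c _ /shadowP[zd _]].
  by apply/ffun_onP => t; rewrite inE zd.
by rewrite card_ffun_on card_ord card_ord_lt.
Qed.
End Encoder.

Section LogBounds.
Local Open Scope ring_scope.
Variable R : realType.

Lemma ln_natr_prod (I : Type) (r : seq I) (P : pred I) (a : I -> nat) :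
  (forall i, 0 < a i)%N ->
  ln ((\prod_(i <- r | P i) a i)%:R : R) = \sum_(i <- r | P i) ln (a i)%:R.
Proof.
move=> a_gt0; elim: r => [|i r IH]; first by rewrite !big_nil ln1.
rewrite !big_cons; case: (P i) => //.
by rewrite natrM lnM ?posrE ?ltr0n ?prodn_gt0 // IH.
Qed.

Lemma powR_log_card_le_shadow k d n (W : {set word k n}) :
  (1 < d)%N -> (d <= k)%N -> (0 < #|W|)%N ->
  d%:R `^ (ln (#|W|%:R : R) / ln k%:R) <= #|shadow d W|%:R.
Proof.
move=> d1 dk W0.
have d0 : (0 < d)%N := ltnW d1.
have lnd : 0 < ln (d%:R : R) by rewrite ln_gt0 // ltr1n.
have lnk : 0 < ln (k%:R : R) by rewrite ln_gt0 // ltr1n (leq_trans d1).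
set e := ln (k%:R : R) / ln d%:R.
have e1 : 1 <= e by rewrite ler_pdivlMr // mul1r ler_ln ?posrE ?ltr0n ?ler_nat // (leq_trans d0).
have dek : d%:R `^ e = k%:R :> R.
  by rewrite /powR gt_eqF ?ltr0n // mulfVK ?gt_eqF // lnK // posrE ltr0n (leq_trans d0).
have WU := card_le_shadow_powR W e1 dek dk.
have U0 : 0 < (#|shadow d W|%:R : R).
  rewrite ltr0n lt0n; apply: contraTneq WU => ->.
  by rewrite powR0 ?gt_eqF ?(lt_le_trans ltr01) // -ltNge ltr0n.
rewrite /powR gt_eqF ?ltr0n // -[X in _ <= X]lnK ?posrE // ler_expR.
rewrite -ler_ln ?posrE ?ltr0n ?powR_gt0 // ln_powR in WU.
rewrite -ler_pdivlMr // ler_pdivrMr //; apply: le_trans WU _; rewrite /e; lra.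
Qed.

Lemma feasible_vec_ln_bound (k d r n : nat) (G : 'I_r -> rel 'I_k) (m : {ffun 'I_r -> nat}) i0 :
  (1 < d)%N -> (d <= k)%N -> G i0 =2 @G_first k d -> feasible_vec n G m ->
  ln ((m i0)%:R : R) / ln d%:R + ln (\prod_(i | i != i0) m i)%:R / ln k%:R <= n%:R.
Proof.
move=> d1 dk G0 [m_gt0 [E HE]].
set s := _ / ln k%:R.
have lnd : 0 < ln (d%:R : R) by rewrite ln_gt0 // ltr1n.
have shadow_ge (c : 'I_(m i0)) : d%:R `^ s <= #|shadow d (codewords m E i0 c)|%:R.
  have card_c := card_codewords HE (ltn_ord c).
  by rewrite /s -card_c powR_log_card_le_shadow // card_c prodn_gt0.
have sum_le : (m i0)%:R * d%:R `^ s <= (d ^ n)%:R :> R.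
  apply: le_trans (_ : \sum_(c < m i0) (#|shadow d (codewords m E i0 c)|%:R : R) <= _).
    by rewrite -[X in X%:R * _]card_ord mulr_natl -sumr_const ler_sum.
  by rewrite -natr_sum ler_nat (sum_card_shadow_codewords HE G0).
have m0 : 0 < (m i0)%:R :> R by rewrite ltr0n.
have ds : 0 < d%:R `^ s :> R by rewrite powR_gt0 // ltr0n ltnW.
rewrite -ler_ln ?posrE ?mulr_gt0 ?ltr0n ?expn_gt0 ?(ltnW d1) // in sum_le.
rewrite lnM ?posrE // ln_powR natrX lnXn ?ltr0n ?(ltnW d1) // in sum_le.
by rewrite -(ler_pM2r lnd) mulrDl divfK ?gt_eqF // mulr_natl.
Qed.
End LogBounds.

Section Limits.
Local Open Scope R_scope.

Lemma Un_cv_const (c : R) : Un_cv (fun _ => c) c.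
Proof. by move=> eps eps0; exists 0%N => j _; rewrite /R_dist Rminus_diag Rabs_R0. Qed.

Lemma Un_cv_div_const (u : nat -> R) (l c : R) : Un_cv u l -> Un_cv (fun j => u j / c) (l / c).
Proof. by move=> ul; apply: CV_mult ul (Un_cv_const _). Qed.

Lemma Un_cv_big_sum (I : Type) (r : seq I) (P : pred I) (u : I -> nat -> R) (l : I -> R) :
  (forall i, Un_cv (u i) (l i)) ->
  Un_cv (fun j => \big[Rplus/0]_(i <- r | P i) u i j) (\big[Rplus/0]_(i <- r | P i) l i).
Proof.
move=> ul; elim: r => [|i r IH].
  by rewrite big_nil; refine (Un_cv_ext _ _ _ _ (Un_cv_const 0)) => j; rewrite big_nil.
rewrite big_cons; case Pi: (P i).
  by refine (Un_cv_ext _ _ _ _ (CV_plus _ _ _ _ (ul i) IH)) => j; rewrite big_cons Pi.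
by refine (Un_cv_ext _ _ _ _ IH) => j; rewrite big_cons Pi.
Qed.

Lemma Un_cv_le_eventually (u : nat -> R) (l c : R) (J : nat) :
  Un_cv u l -> (forall j, (J <= j)%N -> u j <= c) -> l <= c.
Proof.
move=> ul uc.
refine (Rle_cv_lim _ (CV_shift' u J l ul) (Un_cv_const c)) => j.
by apply: uc; rewrite leq_addl.
Qed.

End Limits.

Section Rates.
Local Open Scope R_scope.

Lemma ln_INR_gt0 (d : nat) : (1 < d)%N -> (0 < Rpower.ln (INR d))%R.
Proof. by move=> d1; rewrite RlnE INRE ln_gt0 // ltr1n. Qed.

Lemma ln2_gt0 : (0 < Rpower.ln 2)%R.
Proof. exact/RltP/(Rlt_trans _ _ _ _ ln_lt_2)/Rinv_0_lt_compat/Rlt_0_2. Qed.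

Lemma log2_INR_gt0 (d : nat) : (1 < d)%N -> (0 < log2 (INR d))%R.
Proof. by move=> d1; rewrite /log2 RdivE divr_gt0 ?ln_INR_gt0 ?ln2_gt0. Qed.

Lemma log2_rate_ratio (x y a : R) : (0 < Rpower.ln y)%R -> (0 < a)%R ->
  log2 x / a / log2 y = Rpower.ln x / Rpower.ln y / a.
Proof. by move=> y0 a0; rewrite /log2 !RdivE; field; rewrite !gt_eqF ?ln2_gt0. Qed.

Lemma big_Rplus_div (I : Type) (r : seq I) (P : pred I) (F : I -> R) (c : R) :
  \big[Rplus/0]_(i <- r | P i) (F i / c) = \big[Rplus/0]_(i <- r | P i) F i / c.
Proof. exact: esym (mulr_suml _ _ _ _). Qed.

Lemma feasible_vec_rate_bound (k d r n : nat) (G : 'I_r -> rel 'I_k) (m : {ffun 'I_r -> nat}) i0 :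
  (1 < d)%N -> (d <= k)%N -> G i0 =2 @G_first k d -> feasible_vec n G m -> (0 < n)%N ->
  log2 (INR (m i0)) / INR n / log2 (INR d)
    + \big[Rplus/0]_(i < r | i != i0) (log2 (INR (m i)) / INR n / log2 (INR k)) <= 1.
Proof.
move=> d1 dk G0 Hf n0.
have := @feasible_vec_ln_bound R k d r n G m i0 d1 dk G0 Hf.
rewrite ln_natr_prod; last exact: Hf.1.
have n_gt0 : (0 < INR n)%R by rewrite INRE ltr0n.
have lnk := ln_INR_gt0 (leq_trans d1 dk).
move=> bound; rewrite log2_rate_ratio ?ln_INR_gt0 //.
under eq_bigr => i _ do rewrite log2_rate_ratio //.
rewrite !big_Rplus_div.
have -> : (\sum_(i | i != i0) Rpower.ln (INR (m i)) = \sum_(i | i != i0) ln (m i)%:R)%R.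
  by apply: eq_bigr => i _; rewrite RlnE INRE.
rewrite !RlnE !INRE !RdivE RplusE -mulrDl; apply/RleP.
rewrite ler_pdivrMr ?ltr0n // mul1r; exact: bound.
Qed.
End Rates.

Unset Implicit Arguments.
Local Open Scope R_scope.

Theorem corollary13 (d k r : nat) (G : 'I_r -> rel 'I_k) (Rv : 'I_r -> R) (alpha : R) :
  (2 <= d)%N -> (d <= k)%N -> (2 <= r)%N ->
  (forall i : 'I_r, nat_of_ord i = 0%N -> G i =2 @G_first k d) ->
  (forall i : 'I_r, nat_of_ord i <> 0%N -> is_graph (G i)) ->
  0 <= alpha <= 1 ->
  (forall i : 'I_r, nat_of_ord i = 0%N -> Rv i = alpha * log2 (INR d)) ->
  feasible_rate G Rv ->
  \big[Rplus/0]_(i < r | nat_of_ord i != 0%N) Rv i <= (1 - alpha) * log2 (INR k).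
Proof.
move=> d2 dk r2 G0 _ _ Rv0 [ns [ms [Hf [Hlen Hcv]]]].
pose i0 : 'I_r := Ordinal (ltnW r2).
have log2k := log2_INR_gt0 (leq_trans d2 dk).
have [J HJ] := Hlen 1%N.
have lim : Rv i0 / log2 (INR d) + \big[Rplus/0]_(i < r | nat_of_ord i != 0%N) (Rv i / log2 (INR k)) <= 1.
  apply: (Un_cv_le_eventually (J := J) (CV_plus _ _ _ _ (Un_cv_div_const _ (Hcv i0))
            (Un_cv_big_sum _ _ (fun i => Un_cv_div_const _ (Hcv i))))) => j Jj.
  have := feasible_vec_rate_bound d2 dk (G0 i0 erefl) (Hf j) (HJ j Jj).
  by rewrite (eq_bigl (fun i : 'I_r => nat_of_ord i != 0%N)).
rewrite Rv0 // big_Rplus_div !RdivE mulfK ?gt_eqF ?log2_INR_gt0 // RplusE in lim.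
move/RleP: lim => lim; apply/RleP; rewrite -ler_pdivrMr // RminusE; lra.
Qed.
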